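(* For every time $t\in\{0,1,\dots,T-1\}$, every risk-aversion vector $\beta$, and every spot price $p\in\mathbb R$: (i) for every $r\in\mathcal R$, the map $x\mapsto xp+\tilde V_{t,T}(r+x,p\,|\,\beta)$ is convex on $\mathcal X(r)$; (ii) the map $r\mapsto \tilde V_{t,T}(r,p\,|\,\beta)$ is convex on $\mathcal R$; (iii) the map $r\mapsto V_{t,T}(r,p\,|\,\beta)$ is convex on $\mathcal R$. Moreover, $r\mapsto V_{T,T}(r,p\,|\,\beta)$ is convex on $\mathcal R$.
   Context: Model (dynamic EV charging). Fix a horizon $T\in\{1,2,\dots\}$, a battery capacity $R_{\max}>0$, a maximal charge per period $x_{\max}>0$, an initial charge $R_0\in[0,R_{\max}]$, an access fee $c_f\in\mathbb R$, a reference price $p_{\mathrm{ref}}>0$, a constant $\gamma_h\ge 0$, a deterministic seasonality function $g:\mathbb R\to\mathbb R$, and price parameters $\kappa_Y>0$, $\mu_Y\in\mathbb R$, $\sigma_Y>0$, $\lambda_J\in(0,1)$, $\mu_J\in\mathbb R$, $\sigma_J>0$. Spot prices are $P_t=g(t)+Y_t$ with $Y_{t+1}=Y_te^{-\kappa_Y}+\mu_Y(1-e^{-\kappa_Y})+\xi_{t+1}+X_{t+1}J_{t+1}$, where $(\xi_t)$ are i.i.d. $\mathcal N\big(0,\sigma_Y^2(1-e^{-2\kappa_Y})/(2\kappa_Y)\big)$, $(X_t)$ are i.i.d. Bernoulli$(\lambda_J)$, $(J_t)$ are i.i.d. $\mathcal N(\mu_J,\sigma_J^2)$, all mutually independent.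 Define $\psi_{t+1}=g(t+1)-g(t)e^{-\kappa_Y}+\mu_Y(1-e^{-\kappa_Y})+\xi_{t+1}+X_{t+1}J_{t+1}$ and $\psi_{t+1,Y}=\psi_{t+1}-g(t+1)$ (so given $P_t=p$, $P_{t+1}$ has the law of $pe^{-\kappa_Y}+\psi_{t+1}$ and $Y_{t+1}$ that of $pe^{-\kappa_Y}+\psi_{t+1,Y}$). Let $\mathcal R=[0,R_{\max}]$, $\mathcal X(r)=[0,\min\{R_{\max}-r,x_{\max}\}]$, and shortage $h(r)=\min\{R_0+Tx_{\max},R_{\max}\}-r$. Let $\gamma_Y:\mathbb R\to(0,\infty)$ be a compensation function. Risk measures. For $\alpha\in(0,1)$: $\mathrm{VaR}_\alpha(X)=\inf\{u:\mathbf P(X\le u)>\alpha\}$, $\mathrm{CVaR}_\alpha(X)=\inf_u\{u+(1-\alpha)^{-1}\mathbf E[(X-u)^+]\}$. For $\beta_t=(\lambda_t,\alpha_t)\in[0,1]\times(0,1)$, $\rho_{\beta_t}(X)=(1-\lambda_t)\mathbf E[X]+\lambda_t\mathrm{CVaR}_{\alpha_t}(X)$. A risk-aversion vector is $\beta=(\lambda_0,\alpha_0,\dots,\lambda_T,\alpha_T)$. Value functions. For $r\in\mathcal R$, $p\in\mathbb R$: $V_{T,T}(r,p\,|\,\beta)=\rho_{\beta_T}\big[\big(1+\gamma_h h(r)+\gamma_Y(pe^{-\kappa_Y}+\psi_{T+1,Y})\big)h(r)p_{\mathrm{ref}}\big]$, and for $t=T-1,\dots,0$: $\tilde V_{t,T}(r,p\,|\,\beta)=\rho_{\beta_t}\big[V_{t+1,T}(r,pe^{-\kappa_Y}+\psi_{t+1}\,|\,\beta)\big]$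 (post-decision value function) and $V_{t,T}(r,p\,|\,\beta)=\min_{x\in\mathcal X(r)}\{xp-c_f+\tilde V_{t,T}(r+x,p\,|\,\beta)\}$. *)

From HB Require Import structures.
From mathcomp Require Import all_boot all_order all_algebra.
From mathcomp Require Import all_classical all_reals all_analysis.
Set Implicit Arguments. Unset Strict Implicit. Unset Printing Implicit Defensive.
Import Order.TTheory GRing.Theory Num.Theory.
Import numFieldNormedType.Exports.
Local Open Scope classical_set_scope.
Local Open Scope ring_scope.

Record ev_model (R : realType) := EVModel {
  ev_T : nat;
  ev_Rmax : R;         (* battery capacity *)
  ev_xmax : R;         (* maximal charge per period *)
  ev_R0 : R;           (* initial charge *)
  ev_cf : R;           (* access fee *)
  ev_pref : R;         (* reference price *)
  ev_gh : R;
  ev_g : R -> R;       (* seasonality *)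
  ev_kY : R; ev_muY : R; ev_sY : R;
  ev_lJ : R; ev_muJ : R; ev_sJ : R;
  ev_gY : R -> R       (* compensation function gamma_Y *)
}.

Section EV.
Context {R : realType} (M : ev_model R).
Local Notation T := (ev_T M).
Local Notation Rmax := (ev_Rmax M).
Local Notation xmax := (ev_xmax M).
Local Notation kY := (ev_kY M).

(** One-step noise space: (xi, (X, J)) with xi, X, J independent, i.e. the
    joint law is the product of the three marginal laws. *)
Definition noise_space := (R * (bool * R))%type.

Definition sd_xi : R :=
  Num.sqrt (ev_sY M ^+ 2 * (1 - expR (- (2 * kY))) / (2 * kY)).

Definition noise_prob :=
  (normal_prob 0 sd_xi \x (bernoulli_prob (ev_lJ M) \x normal_prob (ev_muJ M) (ev_sJ M)))%E.

Definition noise (w : noise_space) : R :=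
  w.1 + (if w.2.1 then w.2.2 else 0).

(** psi_{t+1} as a function of the noise, for t+1 = s *)
Definition psi (s : nat) (w : noise_space) : R :=
  ev_g M s%:R - ev_g M (s.-1)%:R * expR (- kY) + ev_muY M * (1 - expR (- kY)) + noise w.

Definition psiY (s : nat) (w : noise_space) : R := psi s w - ev_g M s%:R.

Definition Ex (Z : noise_space -> \bar R) : \bar R :=
  (\int[noise_prob]_w Z w)%E.

Definition CVaR (a : R) (Z : noise_space -> \bar R) : \bar R :=
  ereal_inf [set (u%:E + ((1 - a)^-1)%:E * Ex (fun w => maxe (Z w - u%:E) 0%E))%E
            | u in [set: R]].

Definition rho (l a : R) (Z : noise_space -> \bar R) : \bar R :=
  ((1 - l)%:E * Ex Z + l%:E * CVaR a Z)%E.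

Definition statesR : set R := `[0, Rmax].
Definition actions (r : R) : set R := `[0, Num.min (Rmax - r) xmax].
Definition shortage (r : R) : R := Num.min (ev_R0 M + T%:R * xmax) Rmax - r.

Section values.
Variables (lam alpha : nat -> R).  (* risk-aversion vector beta *)

Definition VT (r p : R) : \bar R :=
  rho (lam T) (alpha T) (fun w =>
    ((1 + ev_gh M * shortage r + ev_gY M (p * expR (- kY) + psiY T.+1 w))
       * shortage r * ev_pref M)%:E).

(** Vrec n = V_{T-n,T}, for n <= T. *)
Fixpoint Vrec (n : nat) : R -> R -> \bar R :=
  match n with
  | 0 => VT
  | n'.+1 => fun r p =>
      ereal_inf [set ((x * p - ev_cf M)%:E +
                       rho (lam (T - n)) (alpha (T - n))
                         (fun w => Vrec n' (r + x) (p * expR (- kY) + psi (T - n') w)))%E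
                | x in actions r]
  end.

Definition V (t : nat) (r p : R) : \bar R := Vrec (T - t) r p.

Definition Vtilde (t : nat) (r p : R) : \bar R :=
  rho (lam t) (alpha t) (fun w => V t.+1 r (p * expR (- kY) + psi t.+1 w)).

End values.
End EV.

Definition econvex {R : realType} (D : set R) (f : R -> \bar R) : Prop :=
  forall a b (l : R), D a -> D b -> (0 <= l <= 1)%R ->
    (f (l * a + (1 - l) * b)%R <= l%:E * f a + (1 - l)%:E * f b)%E.

From HB Require Import structures.
From mathcomp Require Import all_boot all_order all_algebra.
From mathcomp Require Import all_classical all_reals all_analysis.
From mathcomp Require Import measurable_realfun.
From mathcomp Require Import ring lra zify.
Import Order.TTheory GRing.Theory Num.Theory.
Local Open Scope classical_set_scope.
Local Open Scope ring_scope.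
Set Implicit Arguments. Unset Strict Implicit. Unset Printing Implicit Defensive.

(* Convexity propagates backwards through the dynamic program.  For each noise
   outcome the terminal cost is a convex quadratic in the charge level; the
   risk measure (1 - lambda) E + lambda CVaR is monotone and convex, so it maps
   pointwise convex integrands to convex functions; and minimizing a jointly
   convex function of (r, x) over the convex graph of the action constraint
   gives a convex function of r.  The risk measures are only defined for
   integrands measurable in the noise, so the induction also carries
   measurability of the value functions in the price; for the minimum over the
   uncountable action interval this again comes from convexity in x, which
   lets the infimum be taken over a countable dense set. *)

Section ereal_conv.
Context {R : realType}.
Local Open Scope ereal_scope.

Lemma lee_conv_ereal_inf (f1 f2 : R -> \bar R) (A1 A2 : set R) (c : \bar R) (l : R) :
  (0 <= l <= 1)%R -> A1 !=set0 -> A2 !=set0 ->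
  (forall x, A1 x -> f1 x \is a fin_num) -> (forall y, A2 y -> f2 y \is a fin_num) ->
  (forall x y, A1 x -> A2 y -> c <= l%:E * f1 x + (1 - l)%:E * f2 y) ->
  c <= l%:E * ereal_inf (f1 @` A1) + (1 - l)%:E * ereal_inf (f2 @` A2).
Proof.
move=> /andP[l0 l1] [x1 A1x1] [y1 A2y1] f1f f2f H.
have [l0E|lne0] := eqVneq l 0%R.
  rewrite l0E mul0e add0e subr0 mul1e; apply: le_ereal_inf_tmp => _ [y Ay <-].
  by have := H x1 y A1x1 Ay; rewrite l0E mul0e add0e subr0 mul1e.
have [l1E|lne1] := eqVneq l 1%R.
  rewrite l1E subrr mul0e adde0 mul1e; apply: le_ereal_inf_tmp => _ [x Ax <-].
  by have := H x y1 Ax A2y1; rewrite l1E subrr mul0e adde0 mul1e.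
have lp : (0 < l)%R by rewrite lt_neqAle eq_sym lne0.
have lq : (0 < 1 - l)%R by rewrite subr_gt0 lt_neqAle lne1.
case: c H => [c| |] H; last by rewrite leNye.
  2: by move: (H _ _ A1x1 A2y1); rewrite -(fineK (f1f _ A1x1)) -(fineK (f2f _ A2y1)).
have inf1_ge y : A2 y -> ((c - (1 - l) * fine (f2 y)) / l)%:E <= ereal_inf (f1 @` A1).
  move=> Ay; apply: le_ereal_inf_tmp => _ [x Ax <-].
  move: (H _ _ Ax Ay); rewrite -(fineK (f1f _ Ax)) -(fineK (f2f _ Ay)).
  by rewrite -!EFinM -EFinD !lee_fin ler_pdivrMr// => h; lra.
have inf_fin (f : R -> \bar R) A z (b : R) : A z -> f z \is a fin_num ->
    b%:E <= ereal_inf (f @` A) -> ereal_inf (f @` A) \is a fin_num.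
  move=> Az fz bA; rewrite fin_numElt (lt_le_trans (ltNyr _) bA) /=.
  apply: (le_lt_trans (ereal_inf_lbound _)); first by exists z.
  by rewrite -(fineK fz) ltry.
have I1f := inf_fin _ _ _ _ A1x1 (f1f _ A1x1) (inf1_ge _ A2y1).
set i1 := fine (ereal_inf (f1 @` A1)).
have inf2_ge : ((c - l * i1) / (1 - l))%:E <= ereal_inf (f2 @` A2).
  apply: le_ereal_inf_tmp => _ [y Ay <-].
  move: (inf1_ge _ Ay); rewrite -(fineK I1f) -/i1 lee_fin ler_pdivrMr// => h.
  by rewrite -(fineK (f2f _ Ay)) lee_fin ler_pdivrMr//; lra.
have I2f := inf_fin _ _ _ _ A2y1 (f2f _ A2y1) inf2_ge.
move: inf2_ge; rewrite -(fineK I1f) -(fineK I2f) -/i1 lee_fin ler_pdivrMr// => h.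
by rewrite -!EFinM -EFinD lee_fin; lra.
Qed.

Lemma ereal_inf_image_ltey (f : R -> \bar R) (A : set R) :
  ereal_inf (f @` A) = ereal_inf (f @` (A `&` [set x | f x < +oo])).
Proof.
apply/eqP; rewrite eq_le; apply/andP; split.
  by apply: ereal_inf_le_tmp => _ [x [Ax _] <-]; exists x.
apply: le_ereal_inf_tmp => _ [x Ax <-].
have [fx|] := ltP (f x) +oo; first by apply: ereal_inf_lbound; exists x.
by rewrite leye_eq => /eqP ->; rewrite leey.
Qed.

Lemma lee_conv_EFinD (l a b : R) (x y z : \bar R) :
  x \is a fin_num -> y \is a fin_num ->
  z <= l%:E * x + (1 - l)%:E * y ->
  (l * a + (1 - l) * b)%:E + z <= l%:E * (a%:E + x) + (1 - l)%:E * (b%:E + y).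
Proof.
case: x y z => [x| |] [y| |] [z| |]//= _ _; rewrite -!EFinM -!EFinD ?lee_fin ?leNye//.
move=> h; rewrite [leRHS](_ : _ = l * a + (1 - l) * b + (l * x + (1 - l) * y))%R.
  by rewrite lerD2l.
by ring.
Qed.

End ereal_conv.

Section rat_seq.
Context {R : realType}.

Definition rat_seq (n : nat) : R := ratr (odflt 0%R (unpickle n : option rat)).

Lemma rat_seq_dense (u e : R) : 0 < e -> exists n, u <= rat_seq n <= u + e.
Proof.
move=> e0; have /rat_in_itvoo[q] : u < u + e by rewrite ltrDl.
rewrite in_itv /= => /andP[h1 h2].
by exists (pickle q); rewrite /rat_seq pickleK /= (ltW h1) (ltW h2).
Qed.

Definition itv_seq (a b : R) (n : nat) : R :=
  if n is n'.+1 then (if a <= rat_seq n' <= b then rat_seq n' else b) else b.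

Lemma itv_seq_in (a b : R) n : a <= b -> `[a, b]%classic (itv_seq a b n).
Proof.
move=> ab; rewrite /= in_itv /=.
by case: n => [|n] /=; [|case: ifP]; rewrite // lexx andbT.
Qed.

Local Open Scope ereal_scope.

(* Convexity on the chord [[x, b]] bounds [f] near [x] from above by [f x]. *)
Lemma econvex_itv_near_le (f : R -> \bar R) (a b x eps : R) :
  (forall y, `[a, b]%classic y -> f y \is a fin_num) -> econvex `[a, b]%classic f ->
  (a <= x)%R -> (x < b)%R -> (0 < eps)%R ->
  exists2 del, (0 < del)%R & forall q, (x <= q <= x + del)%R ->
    `[a, b]%classic q /\ f q <= f x + eps%:E.
Proof.
move=> ffin fconv ax xb eps0.
have Ax : `[a, b]%classic x by rewrite /= in_itv /= ax ltW.
have Ab : `[a, b]%classic b by rewrite /= in_itv /= (le_trans ax (ltW xb)) lexx.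
have bx0 : (0 < b - x)%R by rewrite subr_gt0.
set gx := fine (f x); set gb := fine (f b); set c := (`|gb - gx| + 1)%R.
have c0 : (0 < c)%R by rewrite ltr_wpDl.
exists ((b - x) * Num.min 1 (eps / c))%R; first by rewrite mulr_gt0// lt_min ltr01 divr_gt0.
move=> q /andP[xq qx]; set th := ((q - x) / (b - x))%R.
have th_le : (th <= Num.min 1 (eps / c))%R by rewrite ler_pdivrMr// mulrC lerBlDl.
have th1 : (th <= 1)%R by move: th_le; rewrite le_min => /andP[].
have th0 : (0 <= th)%R by rewrite /th divr_ge0 ?subr_ge0// ltW.
have th01 : (0 <= th <= 1)%R by rewrite th0 th1.
have qE : (th * b + (1 - th) * x)%R = q by rewrite /th; field; exact: lt0r_neq0.
split.
  rewrite /= in_itv /= (le_trans ax xq) -qE.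
  have : (0 <= (1 - th) * (b - x))%R by rewrite mulr_ge0 ?subr_ge0// ltW.
  lra.
rewrite -qE; apply: (le_trans (fconv _ _ _ Ab Ax th01)).
rewrite -(fineK (ffin _ Ab)) -(fineK (ffin _ Ax)) -/gx -/gb -!EFinM -!EFinD lee_fin.
have th_c : (th * c <= eps)%R.
  by rewrite -ler_pdivlMr// (le_trans th_le)// ge_min lexx orbT.
have : (th * (gb - gx) <= th * c)%R.
  by rewrite ler_wpM2l// /c (le_trans (ler_norm _))// lerDl.
lra.
Qed.

Lemma econvex_ereal_inf_itv_seq (f : R -> \bar R) (a b : R) : (a <= b)%R ->
  (forall x, `[a, b]%classic x -> f x \is a fin_num) -> econvex `[a, b]%classic f ->
  ereal_inf (f @` `[a, b]%classic) = einfs (fun n => f (itv_seq a b n)) 0%N.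
Proof.
move=> ab ffin fconv; rewrite /einfs /sdrop /=.
apply/eqP; rewrite eq_le; apply/andP; split.
  by apply: ereal_inf_le_tmp => _ [n _ <-]; exists (itv_seq a b n) => //; exact: itv_seq_in.
apply: le_ereal_inf_tmp => _ [x Ax <-]; set I := ereal_inf _.
have I_le n : I <= f (itv_seq a b n) by apply: ereal_inf_lbound; exists n.
apply/lee_addgt0Pr => eps eps0.
have [->|xb] := eqVneq x b; first by rewrite (le_trans (I_le 0%N))// leeDl// lee_fin ltW.
have /andP[ax xleb] : (a <= x <= b)%R by move: Ax; rewrite /= in_itv.
have xltb : (x < b)%R by rewrite lt_neqAle xb.
have [del del0 near_le] := econvex_itv_near_le ffin fconv ax xltb eps0.
have [n /near_le[Aq fq]] := rat_seq_dense x del0.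
apply: le_trans (I_le n.+1) _.
by rewrite /= (_ : (a <= rat_seq n <= b)%R = true)//; move: Aq; rewrite /= in_itv.
Qed.

End rat_seq.

Section risk_measures.
Context {R : realType} d (T : measurableType d) (mu : {measure set T -> \bar R}).
Local Open Scope ereal_scope.
Implicit Types (Z Za Zb Zc : T -> \bar R) (l a u : R).

Definition Emu Z : \bar R := \int[mu]_w Z w.

Definition cvar_objective a Z u : \bar R :=
  u%:E + ((1 - a)^-1)%:E * Emu (fun w => maxe (Z w - u%:E) 0).

Definition CVaRmu a Z : \bar R := ereal_inf [set cvar_objective a Z u | u in [set: R]].

Definition rhomu l a Z : \bar R := (1 - l)%:E * Emu Z + l%:E * CVaRmu a Z.

Lemma integrable_fin_Emu Z : measurable_fun setT Z ->
  Emu Z \is a fin_num -> mu.-integrable setT Z.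
Proof.
move=> mZ; rewrite /Emu integralE fin_numB => /andP[hp hn].
apply/integrableP; split => //.
have -> : (fun x => `|Z x|) = Z^\+ \+ Z^\- by rewrite -fune_abse.
rewrite ge0_integralD//; last 2 first.
- exact: measurable_funepos.
- exact: measurable_funeneg.
by rewrite ltey_eq fin_numD hp hn.
Qed.

Lemma le_Emu Z Z' : measurable_fun setT Z -> measurable_fun setT Z' ->
  (forall w, Z w <= Z' w) -> Emu Z <= Emu Z'.
Proof.
move=> mZ mZ' h; rewrite /Emu (integralE mu setT Z) (integralE mu setT Z').
apply: leeB; apply: ge0_le_integral => //.
- exact: measurable_funepos.
- exact: measurable_funepos.
- by move=> w _; rewrite !funeposE le_max2.
- exact: measurable_funeneg.
- exact: measurable_funeneg.
- by move=> w _; rewrite !funenegE le_max2// leeN2.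
Qed.

Lemma Emu_le_conv Za Zb Zc l :
  measurable_fun setT Za -> measurable_fun setT Zb -> measurable_fun setT Zc ->
  Emu Za \is a fin_num -> Emu Zb \is a fin_num -> (0 <= l <= 1)%R ->
  (forall w, Zc w <= l%:E * Za w + (1 - l)%:E * Zb w) ->
  Emu Zc <= l%:E * Emu Za + (1 - l)%:E * Emu Zb.
Proof.
move=> ma mb mc fa fb _ h.
have ia := integrable_fin_Emu ma fa; have ib := integrable_fin_Emu mb fb.
have ila := integrableZl measurableT l ia.
have ilb := integrableZl measurableT (1 - l) ib.
have -> : l%:E * Emu Za + (1 - l)%:E * Emu Zb =
          Emu (fun w => l%:E * Za w + (1 - l)%:E * Zb w).
  by rewrite /Emu integralD// !integralZl.
apply: le_Emu h => //.
exact: measurable_int (integrableD measurableT ila ilb).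
Qed.

Lemma maxe_subr_le_conv l (u1 u2 : R) (za zb zc : \bar R) : (0 <= l <= 1)%R ->
  zc <= l%:E * za + (1 - l)%:E * zb ->
  maxe (zc - (l * u1 + (1 - l) * u2)%:E) 0 <=
  l%:E * maxe (za - u1%:E) 0 + (1 - l)%:E * maxe (zb - u2%:E) 0.
Proof.
move=> /andP[l0 l1] h.
have l0' : (0 <= 1 - l)%R by rewrite subr_ge0.
rewrite ge_max adde_ge0 ?mule_ge0 ?lee_fin ?le_max ?lexx ?orbT// andbT.
apply: (@le_trans _ _ (l%:E * (za - u1%:E) + (1 - l)%:E * (zb - u2%:E))).
  apply: (le_trans (leeD2r _ h)).
  rewrite (@muleDr _ l%:E za) ?(@muleDr _ (1 - l)%:E zb) ?fin_num_adde_defl//.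
  by rewrite !muleN -!EFinM addeACA -oppeD// -EFinD.
by apply: leeD; apply: lee_wpmul2l; rewrite ?lee_fin// le_max lexx.
Qed.

Section cvar.
Variable a : R.
Hypothesis a1 : (a < 1)%R.

Let k0 : (0 < (1 - a)^-1)%R. Proof. by rewrite invr_gt0 subr_gt0. Qed.

Let Emaxe_ge0 Z u : 0 <= Emu (fun w => maxe (Z w - u%:E) 0).
Proof. by apply: integral_ge0 => w _; rewrite le_max lexx orbT. Qed.

Let measurable_maxe_subr Z u : measurable_fun setT Z ->
  measurable_fun setT (fun w => maxe (Z w - u%:E) 0).
Proof. by move=> mZ; apply: measurable_maxe => //; exact: emeasurable_funB. Qed.

Lemma cvar_objective_fin_num Z u : cvar_objective a Z u < +oo ->
  Emu (fun w => maxe (Z w - u%:E) 0) \is a fin_num.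
Proof.
rewrite /cvar_objective; case: (Emu _) (Emaxe_ge0 Z u) => [e| |]// _.
by rewrite gt0_muley ?lte_fin.
Qed.

Lemma cvar_objective_ge Z u : u%:E <= cvar_objective a Z u.
Proof. by rewrite leeDl// mule_ge0// lee_fin ltW. Qed.

Lemma cvar_objective_le_shift Z u q : measurable_fun setT Z -> (u <= q)%R ->
  cvar_objective a Z q <= cvar_objective a Z u + (q - u)%:E.
Proof.
move=> mZ uq; rewrite /cvar_objective addeAC -EFinD subrKC leeD2l//.
apply: lee_wpmul2l; first by rewrite lee_fin ltW.
apply: le_Emu; try exact: measurable_maxe_subr.
by move=> w; rewrite le_max2// leeD2l// lee_fin lerN2.
Qed.

Lemma CVaRmu_le_conv Za Zb Zc l :
  measurable_fun setT Za -> measurable_fun setT Zb -> measurable_fun setT Zc ->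
  (0 <= l <= 1)%R -> (forall w, Zc w <= l%:E * Za w + (1 - l)%:E * Zb w) ->
  CVaRmu a Za < +oo -> CVaRmu a Zb < +oo ->
  CVaRmu a Zc <= l%:E * CVaRmu a Za + (1 - l)%:E * CVaRmu a Zb.
Proof.
move=> ma mb mc hl h ha hb.
have objfin Z u : cvar_objective a Z u < +oo -> cvar_objective a Z u \is a fin_num.
  by move=> hu; rewrite fin_numElt hu andbT (lt_le_trans (ltNyr u)) ?cvar_objective_ge.
rewrite /CVaRmu (ereal_inf_image_ltey (cvar_objective a Za)).
rewrite (ereal_inf_image_ltey (cvar_objective a Zb)).
apply: lee_conv_ereal_inf => //.
- by move: ha => /ereal_inf_lt[_ [u _ <-] hu]; exists u.
- by move: hb => /ereal_inf_lt[_ [u _ <-] hu]; exists u.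
- by move=> u [_ /objfin].
- by move=> u [_ /objfin].
move=> u1 u2 [_ /cvar_objective_fin_num Eaf] [_ /cvar_objective_fin_num Ebf].
apply: le_trans; first by apply: ereal_inf_lbound; exists (l * u1 + (1 - l) * u2)%R.
have /andP[l0 l1] := hl; have l0' : (0 <= 1 - l)%R by rewrite subr_ge0.
set Ea := Emu _ in Eaf; set Eb := Emu _ in Ebf.
have hE : Emu (fun w => maxe (Zc w - (l * u1 + (1 - l) * u2)%:E) 0) <=
          l%:E * Ea + (1 - l)%:E * Eb.
  apply: le_trans.
    apply: (le_Emu _ _ (fun w => maxe_subr_le_conv u1 u2 hl (h w))).
    - exact: measurable_maxe_subr.
    - by apply: emeasurable_funD; apply: measurable_funeM; exact: measurable_maxe_subr.
  rewrite /Emu ge0_integralD//; last 4 first.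
  - by move=> w _; rewrite mule_ge0 ?lee_fin// le_max lexx orbT.
  - by apply: measurable_funeM; exact: measurable_maxe_subr.
  - by move=> w _; rewrite mule_ge0 ?lee_fin// le_max lexx orbT.
  - by apply: measurable_funeM; exact: measurable_maxe_subr.
  rewrite !ge0_integralZl ?lee_fin//;
    by [exact: measurable_maxe_subr | move=> w _; rewrite le_max lexx orbT].
rewrite /cvar_objective -/Ea -/Eb.
apply: (le_trans (leeD2l _ (lee_wpmul2l _ hE))); first by rewrite lee_fin ltW.
rewrite -(fineK Eaf) -(fineK Ebf) -!EFinM -!EFinD lee_fin.
by rewrite le_eqVlt; apply/orP; left; apply/eqP; ring.
Qed.

End cvar.

Lemma rhomu_fin_num l a Z : (0 < l < 1)%R -> rhomu l a Z \is a fin_num ->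
  Emu Z \is a fin_num /\ CVaRmu a Z \is a fin_num.
Proof.
move=> /andP[l0 l1]; have l1' : (0 < 1 - l)%R by rewrite subr_gt0.
rewrite /rhomu; case: (Emu Z) => [e| |]; case: (CVaRmu a Z) => [c| |] //;
  by rewrite ?gt0_muley ?gt0_muleNy ?lte_fin.
Qed.

Lemma rhomu_le_conv Za Zb Zc l a lam :
  measurable_fun setT Za -> measurable_fun setT Zb -> measurable_fun setT Zc ->
  (0 <= l <= 1)%R -> (a < 1)%R -> (0 <= lam <= 1)%R ->
  (forall w, Zc w <= lam%:E * Za w + (1 - lam)%:E * Zb w) ->
  rhomu l a Za \is a fin_num -> rhomu l a Zb \is a fin_num ->
  rhomu l a Zc <= lam%:E * rhomu l a Za + (1 - lam)%:E * rhomu l a Zb.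
Proof.
move=> ma mb mc /andP[l0 l1] a1 hlam h.
have [->|lne0] := eqVneq l 0%R.
  rewrite /rhomu !(subr0, mul1e, mul0e, adde0) => fa fb.
  exact: Emu_le_conv.
have [->|lne1] := eqVneq l 1%R.
  rewrite /rhomu !(subrr, mul1e, mul0e, add0e) => fa fb.
  by apply: CVaRmu_le_conv => //; rewrite ltey_eq ?fa ?fb.
have l01 : (0 < l < 1)%R by rewrite !lt_neqAle eq_sym lne0 lne1 l0 l1.
move=> /(rhomu_fin_num l01)[Eaf Caf] /(rhomu_fin_num l01)[Ebf Cbf].
have hE := Emu_le_conv ma mb mc Eaf Ebf hlam h.
have hC : CVaRmu a Zc <= lam%:E * CVaRmu a Za + (1 - lam)%:E * CVaRmu a Zb.
  by apply: CVaRmu_le_conv => //; rewrite ltey_eq ?Caf ?Cbf.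
rewrite /rhomu.
apply: (le_trans (leeD (lee_wpmul2l _ hE) (lee_wpmul2l _ hC))).
- by rewrite lee_fin subr_ge0.
- by rewrite lee_fin.
rewrite -(fineK Eaf) -(fineK Ebf) -(fineK Caf) -(fineK Cbf).
rewrite -!EFinM -!EFinD lee_fin.
by rewrite le_eqVlt; apply/orP; left; apply/eqP; ring.
Qed.

End risk_measures.

Section measurable_risk_param.
Context {R : realType} d1 (X : measurableType d1) d (T : measurableType d)
  (mu : {sigma_finite_measure set T -> \bar R}).
Local Open Scope ereal_scope.
Implicit Types F : X -> T -> \bar R.

Lemma measurable_Emu_param F : measurable_fun setT (fun z : X * T => F z.1 z.2) ->
  measurable_fun setT (fun x => Emu mu (F x)).
Proof.
move=> mF.
pose G := fun z : X * T => F z.1 z.2.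
have -> : (fun x => Emu mu (F x)) = fubini_F mu G^\+ \- fubini_F mu G^\-.
  apply/funext => x; rewrite /Emu integralE /fubini_F.
  by congr (_ - _); apply: eq_integral => y _; rewrite /G ?funeposE ?funenegE.
apply: emeasurable_funB; apply: measurable_fun_fubini_tonelli_F.
- exact: measurable_funepos.
- by move=> z; exact: funepos_ge0.
- exact: measurable_funeneg.
- by move=> z; exact: funeneg_ge0.
Qed.

(* The objective is 1-Lipschitz from above in [u], so the infimum defining
   CVaR may be taken over the rationals. *)
Lemma CVaRmu_rat_seq a Z : (a < 1)%R -> measurable_fun setT Z ->
  CVaRmu mu a Z = einfs (fun n => cvar_objective mu a Z (rat_seq n)) 0%N.
Proof.
move=> a1 mZ; rewrite /CVaRmu /einfs /sdrop /=.
apply/eqP; rewrite eq_le; apply/andP; split.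
  by apply: ereal_inf_le_tmp => _ [n _ <-]; exists (rat_seq n).
apply: le_ereal_inf_tmp => _ [u _ <-]; apply/lee_addgt0Pr => e e0.
have [n /andP[un ne]] := rat_seq_dense u e0.
apply: le_trans; first by apply: ereal_inf_lbound; exists n.
apply: (le_trans (cvar_objective_le_shift _ a1 mZ un)).
by rewrite leeD2l// lee_fin lerBlDl.
Qed.

Lemma measurable_CVaRmu_param a F : (a < 1)%R ->
  measurable_fun setT (fun z : X * T => F z.1 z.2) ->
  measurable_fun setT (fun x => CVaRmu mu a (F x)).
Proof.
move=> a1 mF; have mFx x : measurable_fun setT (F x).
  exact: (measurable_fun_pair2 (f := fun z : X * T => F z.1 z.2) x mF).
have -> : (fun x => CVaRmu mu a (F x)) =
    (fun x => einfs (fun n => cvar_objective mu a (F x) (rat_seq n)) 0%N).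
  by apply/funext => x; rewrite CVaRmu_rat_seq.
apply: (measurable_fun_einfs (f := fun n x => cvar_objective mu a (F x) (rat_seq n))).
move=> n; apply: emeasurable_funD => //; apply: measurable_funeM.
apply: (measurable_Emu_param (F := fun x w => maxe (F x w - (rat_seq n)%:E) 0)).
by apply: measurable_maxe => //; apply: emeasurable_funB.
Qed.

Lemma measurable_rhomu_param l a F : (a < 1)%R ->
  measurable_fun setT (fun z : X * T => F z.1 z.2) ->
  measurable_fun setT (fun x => rhomu mu l a (F x)).
Proof.
move=> a1 mF; apply: emeasurable_funD; apply: measurable_funeM.
  exact: measurable_Emu_param.
exact: measurable_CVaRmu_param.
Qed.

End measurable_risk_param.

Section ev_charging.
Context {R : realType} (M : ev_model R) (lam alpha : nat -> R).
Local Notation T := (ev_T M).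
Local Notation P := (noise_prob M : probability _ R).
Local Notation e := (expR (- ev_kY M)).

Lemma rho_rhomu l a Z : rho M l a Z = rhomu P l a Z.
Proof. by []. Qed.

Lemma measurable_noise : measurable_fun setT (@noise R).
Proof.
apply: measurable_funD => //; apply: measurable_fun_ifT => //.
- exact: (measurableT_comp measurable_fst measurable_snd).
- exact: (measurableT_comp measurable_snd measurable_snd).
Qed.

Lemma measurable_psi s : measurable_fun setT (psi M s).
Proof. by apply: measurable_funD => //; exact: measurable_noise. Qed.

Lemma measurable_psiY s : measurable_fun setT (psiY M s).
Proof. by apply: measurable_funB => //; exact: measurable_psi. Qed.

Lemma measurable_next_price (f : @noise_space R -> R) : measurable_fun setT f ->
  measurable_fun setT (fun z : R * @noise_space R => z.1 * e + f z.2).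
Proof.
move=> mf; apply: measurable_funD; last exact: measurableT_comp mf measurable_snd.
by apply: measurable_funM => //; exact: measurable_fst.
Qed.

Lemma statesRP r : statesR M r <-> 0 <= r <= ev_Rmax M.
Proof. by rewrite /statesR /= in_itv. Qed.

Lemma actionsP r x : actions M r x <-> 0 <= x <= Num.min (ev_Rmax M - r) (ev_xmax M).
Proof. by rewrite /actions /= in_itv. Qed.

Lemma statesR_conv a b l : statesR M a -> statesR M b -> 0 <= l <= 1 ->
  statesR M (l * a + (1 - l) * b).
Proof.
move=> /statesRP/andP[a0 a1] /statesRP/andP[b0 b1] /andP[l0 l1].
apply/statesRP; rewrite addr_ge0 ?mulr_ge0 ?subr_ge0//=.
rewrite [leRHS](_ : _ = l * ev_Rmax M + (1 - l) * ev_Rmax M); last by ring.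
by rewrite lerD ?ler_wpM2l ?subr_ge0.
Qed.

Lemma statesR_add_action r x : statesR M r -> actions M r x -> statesR M (r + x).
Proof.
move=> /statesRP/andP[r0 _] /actionsP/andP[x0]; rewrite le_min => /andP[x1 _].
by apply/statesRP; rewrite addr_ge0//= -lerBrDl.
Qed.

Lemma actions_conv r1 r2 x1 x2 l : actions M r1 x1 -> actions M r2 x2 -> 0 <= l <= 1 ->
  actions M (l * r1 + (1 - l) * r2) (l * x1 + (1 - l) * x2).
Proof.
move=> /actionsP/andP[x10]; rewrite le_min => /andP[x11 x12].
move=> /actionsP/andP[x20]; rewrite le_min => /andP[x21 x22] /andP[l0 l1].
have l0' : 0 <= 1 - l by rewrite subr_ge0.
apply/actionsP; rewrite addr_ge0 ?mulr_ge0//= le_min; apply/andP; split.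
  rewrite [leRHS](_ : _ = l * (ev_Rmax M - r1) + (1 - l) * (ev_Rmax M - r2)); last by ring.
  by rewrite lerD// ler_wpM2l.
rewrite [leRHS](_ : _ = l * ev_xmax M + (1 - l) * ev_xmax M); last by ring.
by rewrite lerD// ler_wpM2l.
Qed.

Definition convex_measurable (W : R -> R -> \bar R) :=
  (forall r, statesR M r -> measurable_fun setT (W r)) /\
  (forall p, econvex (statesR M) (fun r => W r p)).

Hypothesis xmax_gt0 : 0 < ev_xmax M.
Hypothesis gh_ge0 : 0 <= ev_gh M.
Hypothesis pref_gt0 : 0 < ev_pref M.
Hypothesis measurable_gY : measurable_fun [set: R] (ev_gY M).
Hypothesis risk_params : forall t, (t <= T)%N -> 0 <= lam t <= 1 /\ 0 < alpha t < 1.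
Hypothesis VT_fin_num : forall r p, statesR M r -> VT M lam alpha r p \is a fin_num.
Hypothesis Vtilde_fin_num : forall t r p, (t < T)%N -> statesR M r ->
  Vtilde M lam alpha t r p \is a fin_num.

Lemma actions0 r : statesR M r -> actions M r 0.
Proof.
move=> /statesRP/andP[_ r1]; apply/actionsP.
by rewrite lexx le_min subr_ge0 r1 ltW.
Qed.

(* The terminal cost is [pref * (1 + gh h + gY) h] with [h] affine in [r]:
   a convex quadratic in [r] for every fixed noise. *)
Lemma VT_convex_measurable : convex_measurable (VT M lam alpha).
Proof.
have [/andP[l0 l1] /andP[_ a1]] := risk_params (leqnn T).
pose cost r p w := (1 + ev_gh M * shortage M r + ev_gY M (p * e + psiY M T.+1 w))
  * shortage M r * ev_pref M.
have mcost r p : measurable_fun setT (fun w => (cost r p w)%:E).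
  apply/measurable_EFinP; apply: measurable_funM => //; apply: measurable_funM => //.
  apply: measurable_funD => //; apply: (measurableT_comp measurable_gY).
  by apply: measurable_funD => //; exact: measurable_psiY.
split=> [r _|p a b l Sa Sb hl].
  change (measurable_fun setT
    (fun p => rhomu P (lam T) (alpha T) ((fun p w => (cost r p w)%:E) p))).
  apply: measurable_rhomu_param => //.
  apply/measurable_EFinP; apply: measurable_funM => //; apply: measurable_funM => //.
  apply: measurable_funD => //; apply: (measurableT_comp measurable_gY).
  exact: measurable_next_price (measurable_psiY _).
rewrite /VT !rho_rhomu; apply: rhomu_le_conv; rewrite ?l0 ?VT_fin_num//;
  try exact: mcost.
move=> w; rewrite -!EFinM -EFinD lee_fin.
have -> : shortage M (l * a + (1 - l) * b) = l * shortage M a + (1 - l) * shortage M b.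
  by rewrite /shortage; ring.
have /andP[hl0 hl1] := hl.
rewrite -subr_ge0 [X in 0 <= X](_ : _ = ev_pref M * ev_gh M * (l * (1 - l)) *
  (shortage M a - shortage M b) ^+ 2); last by ring.
by rewrite mulr_ge0 ?sqr_ge0 // !mulr_ge0 ?subr_ge0 ?(ltW pref_gt0).
Qed.

Lemma Vtilde_convex_measurable t : (t < T)%N ->
  convex_measurable (V M lam alpha t.+1) -> convex_measurable (Vtilde M lam alpha t).
Proof.
move=> tT [mV cV]; have [/andP[l0 l1] /andP[_ a1]] := risk_params (ltnW tT).
have mV_next r p : statesR M r ->
    measurable_fun setT (fun w => V M lam alpha t.+1 r (p * e + psi M t.+1 w)).
  move=> Sr; apply: measurableT_comp (mV r Sr) _.
  by apply: measurable_funD => //; exact: measurable_psi.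
split=> [r Sr|p a b l Sa Sb hl].
  change (measurable_fun setT (fun p => rhomu P (lam t) (alpha t)
    ((fun p w => V M lam alpha t.+1 r (p * e + psi M t.+1 w)) p))).
  apply: measurable_rhomu_param => //.
  exact: measurableT_comp (mV r Sr) (measurable_next_price (measurable_psi _)).
rewrite /Vtilde !rho_rhomu; apply: rhomu_le_conv; rewrite ?l0 ?Vtilde_fin_num//.
- exact: mV_next.
- exact: mV_next.
- exact: mV_next (statesR_conv Sa Sb hl).
- by move=> w; exact: cV.
Qed.

Definition decision_value t p c r x : \bar R :=
  ((x * p + c)%:E + Vtilde M lam alpha t (r + x) p)%E.

Lemma decision_value_fin_num t p c r x : (t < T)%N -> statesR M r -> actions M r x ->
  decision_value t p c r x \is a fin_num.
Proof.
by move=> tT Sr Ax; rewrite fin_numD /=; exact: Vtilde_fin_num (statesR_add_action Sr Ax).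
Qed.

Lemma decision_value_conv t p c r1 r2 x1 x2 l : (t < T)%N ->
  (forall p, econvex (statesR M) (fun r => Vtilde M lam alpha t r p)) ->
  statesR M r1 -> statesR M r2 -> actions M r1 x1 -> actions M r2 x2 -> 0 <= l <= 1 ->
  (decision_value t p c (l * r1 + (1 - l) * r2) (l * x1 + (1 - l) * x2) <=
   l%:E * decision_value t p c r1 x1 + (1 - l)%:E * decision_value t p c r2 x2)%E.
Proof.
move=> tT cVt S1 S2 A1 A2 hl.
have S1' := statesR_add_action S1 A1; have S2' := statesR_add_action S2 A2.
have := cVt p _ _ l S1' S2' hl; rewrite /decision_value.
rewrite (_ : l * r1 + (1 - l) * r2 + (l * x1 + (1 - l) * x2) =
  l * (r1 + x1) + (1 - l) * (r2 + x2)); last by ring.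
rewrite (_ : (l * x1 + (1 - l) * x2) * p + c =
  l * (x1 * p + c) + (1 - l) * (x2 * p + c)); last by ring.
exact: lee_conv_EFinD (Vtilde_fin_num p tT S1') (Vtilde_fin_num p tT S2').
Qed.

Lemma Vrec_succ n r p : Vrec M lam alpha n.+1 r p =
  ereal_inf [set ((x * p - ev_cf M)%:E + rho M (lam (T - n.+1)) (alpha (T - n.+1))
    (fun w => Vrec M lam alpha n (r + x) (p * e + psi M (T - n) w)))%E | x in actions M r].
Proof. by []. Qed.

Lemma V_ereal_inf t r p : (t < T)%N ->
  V M lam alpha t r p = ereal_inf [set decision_value t p (- ev_cf M) r x | x in actions M r].
Proof.
move=> tT; rewrite /V (_ : (T - t = (T - t.+1).+1)%N); last by lia.
rewrite Vrec_succ (_ : (T - (T - t.+1).+1 = t)%N); last by lia.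
by rewrite (_ : (T - (T - t.+1) = t.+1)%N); last by lia.
Qed.

Section convex_step.
Variable t : nat.
Hypothesis tT : (t < T)%N.
Hypothesis Vtilde_cm : convex_measurable (Vtilde M lam alpha t).

Lemma decision_value_convex_action p c r : statesR M r ->
  econvex (actions M r) (decision_value t p c r).
Proof.
move=> Sr x1 x2 l A1 A2 hl.
have := decision_value_conv p c tT Vtilde_cm.2 Sr Sr A1 A2 hl.
by rewrite (_ : l * r + (1 - l) * r = r)//; ring.
Qed.

Lemma V_convex p : econvex (statesR M) (fun r => V M lam alpha t r p).
Proof.
move=> r1 r2 l S1 S2 hl; rewrite !V_ereal_inf//.
apply: lee_conv_ereal_inf => //.
- by exists 0; exact: actions0.
- by exists 0; exact: actions0.
- by move=> x; exact: decision_value_fin_num.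
- by move=> x; exact: decision_value_fin_num.
move=> x1 x2 A1 A2; apply: le_trans (decision_value_conv _ _ tT Vtilde_cm.2 S1 S2 A1 A2 hl).
by apply: ereal_inf_lbound; exists (l * x1 + (1 - l) * x2) => //; exact: actions_conv.
Qed.

(* Measurability of the infimum over the uncountable action set follows from
   convexity in the action, which reduces it to a countable infimum. *)
Lemma V_measurable r : statesR M r -> measurable_fun setT (V M lam alpha t r).
Proof.
move=> Sr; set m := Num.min (ev_Rmax M - r) (ev_xmax M).
have m0 : 0 <= m by move: (actions0 Sr) => /actionsP/andP[].
have -> : V M lam alpha t r =
    (fun p => einfs (fun n => decision_value t p (- ev_cf M) r (itv_seq 0 m n)) 0%N).
  apply/funext => p; rewrite V_ereal_inf//; apply: econvex_ereal_inf_itv_seq => //.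
  - by move=> x; exact: decision_value_fin_num.
  - exact: decision_value_convex_action.
apply: (measurable_fun_einfs (f := fun n p =>
  decision_value t p (- ev_cf M) r (itv_seq 0 m n))) => n.
apply: emeasurable_funD; first by apply/measurable_EFinP; apply: measurable_funD.
exact: Vtilde_cm.1 (statesR_add_action Sr (itv_seq_in n m0)).
Qed.

Lemma V_convex_measurable : convex_measurable (V M lam alpha t).
Proof. by split; [exact: V_measurable | exact: V_convex]. Qed.

End convex_step.

Lemma V_T : V M lam alpha T = VT M lam alpha.
Proof. by apply/funext => r; apply/funext => p; rewrite /V subnn. Qed.

Lemma V_convex_measurable_le t : (t <= T)%N -> convex_measurable (V M lam alpha t).
Proof.
move=> tT; rewrite -(subKn tT); elim: (T - t)%N (leq_subr t T) => [|n IH] nT.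
  by rewrite subn0 V_T; exact: VT_convex_measurable.
apply: V_convex_measurable; first by lia.
apply: Vtilde_convex_measurable; first by lia.
by rewrite (_ : (T - n.+1).+1 = T - n)%N; [apply: IH | ]; lia.
Qed.

End ev_charging.

Theorem proposition1 (R : realType) (M : ev_model R) (lam alpha : nat -> R) :
  (1 <= ev_T M)%N ->
  0 < ev_Rmax M -> 0 < ev_xmax M -> 0 <= ev_R0 M <= ev_Rmax M ->
  0 < ev_pref M -> 0 <= ev_gh M ->
  0 < ev_kY M -> 0 < ev_sY M -> 0 < ev_lJ M < 1 -> 0 < ev_sJ M ->
  (forall y, 0 < ev_gY M y) ->
  measurable_fun [set: R] (ev_gY M) ->
  (forall t, (t <= ev_T M)%N -> 0 <= lam t <= 1 /\ 0 < alpha t < 1) ->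
  (* well-definedness: the value functions are finite *)
  (forall r p, statesR M r -> VT M lam alpha r p \is a fin_num) ->
  (forall t r p, (t < ev_T M)%N -> statesR M r ->
     Vtilde M lam alpha t r p \is a fin_num) ->
  (forall t p, (t < ev_T M)%N ->
     (forall r, statesR M r ->
        econvex (actions M r)
          (fun x => ((x * p)%:E + Vtilde M lam alpha t (r + x) p)%E)) /\
     econvex (statesR M) (fun r => Vtilde M lam alpha t r p) /\
     econvex (statesR M) (fun r => V M lam alpha t r p)) /\
  (forall p, econvex (statesR M) (fun r => VT M lam alpha r p)).
Proof.
move=> _ _ xmax0 _ pref0 gh0 _ _ _ _ _ mgY params VT_fin Vt_fin.
have V_cm t : (t <= ev_T M)%N -> convex_measurable M (V M lam alpha t).
  by move=> tT; exact: V_convex_measurable_le.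
split=> [t p tT|p]; last first.
  exact: (VT_convex_measurable gh0 pref0 mgY params VT_fin).2.
have Vt_cm := Vtilde_convex_measurable params Vt_fin tT (V_cm _ tT).
split; last by split; [exact: Vt_cm.2 | exact: V_convex].
move=> r Sr x1 x2 l A1 A2 hl.
have := decision_value_convex_action Vt_fin tT Vt_cm p 0 Sr A1 A2 hl.
by rewrite /decision_value !addr0.
Qed.
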